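(* Consider any tuples $(\lambda ,S_k^\lambda ,F_k^\lambda ,P_k^\lambda )_{k = 0}^{N - 1}$ such that $\lambda>0$ and $C(\{ S_k^\lambda \} _{k = 0}^{N - 1} ) = \gamma$, i.e. elements of \[ \Lambda : = \{ (\lambda ,S_k^\lambda ,F_k^\lambda ,P_k^\lambda )_{k = 0}^{N - 1} :\lambda > 0, C(\{ S_k^\lambda \} _{k = 0}^{N - 1} ) = \gamma \}. \] Then, the corresponding $\{(S_k^\lambda,F_k^\lambda)\}_{k=0}^{N-1}$ with $(\lambda ,S_k^\lambda ,F_k^\lambda ,P_k^\lambda )_{k = 0}^{N - 1} \in \Lambda$ is an optimal solution of the constrained LQG (covariance selection) problem.
   Context: Consider the stochastic LTI system $x(k+1)=Ax(k)+Bu(k)+w(k)$ with $x(k)\in\mathbb R^n$, $u(k)\in\mathbb R^m$, $x(0)\sim\mathcal N(z,V)$, $w(k)\sim\mathcal N(0,W)$ mutually independent, and linear feedback $u(k)=F_kx(k)$, $k\in\{0,\dots,N-1\}$. With $S_k=\mathbb E([x(k);u(k)][x(k);u(k)]^T)$, the constrained LQG (covariance selection) problem is: minimize $J_p(\{S_k\})=\mathrm{Tr}\big(Q_f([A\ B]S_{N-1}[A\ B]^T+W)\big)+\sum_{k=0}^{N-1}\mathrm{Tr}(\mathrm{diag}(Q_k,R_k)S_k)$ over $\{S_k,F_k\}$ subject to $S_k=\Phi(F_k,S_{k-1})$ ($k=1,\dots,N-1$), $S_0=[I_n;F_0](V+zz^T)[I_n;F_0]^T$, and $C(\{S_k\})\le\gamma$,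 where $C(\{S_k\})=\mathrm{Tr}\big(\tilde Q_f([A\ B]S_{N-1}[A\ B]^T+W)\big)+\sum_{k=0}^{N-1}\mathrm{Tr}(\mathrm{diag}(\tilde Q_k,\tilde R_k)S_k)$ and $\Phi(F,S)=[I_n;F]([A\ B]S[A\ B]^T+W)[I_n;F]^T$. Assumptions: $Q_f,\tilde Q_f,Q_k,\tilde Q_k\succeq0$, $R_k+\lambda\tilde R_k\succ0$ for all $k$, $\lambda>0$; $V\succ0$, $W\succ0$; strict feasibility of the inequality constraint; and $C(\{S_k^0\})>\gamma$ (the unconstrained LQG solution violates the constraint). For $\lambda\ge0$, $X_N^\lambda=Q_f+\lambda\tilde Q_f$, $X_k^\lambda=A^TX_{k+1}^\lambda A-A^TX_{k+1}^\lambda B(R_k+\lambda\tilde R_k+B^TX_{k+1}^\lambda B)^{-1}B^TX_{k+1}^\lambda A+Q_k+\lambda\tilde Q_k$, $F_k^\lambda=-(R_k+\lambda\tilde R_k+B^TX_{k+1}^\lambda B)^{-1}B^TX_{k+1}^\lambda A$, $S_0^\lambda=[I;F_0^\lambda](V+zz^T)[I;F_0^\lambda]^T$, $S_k^\lambda=\Phi(F_k^\lambda,S_{k-1}^\lambda)$, $P_k^\lambda=\begin{bmatrix}Q_k+\lambda\tilde Q_k+A^TX_{k+1}^\lambda A & A^TX_{k+1}^\lambda B\\ B^TX_{k+1}^\lambda A & R_k+\lambda\tilde R_k+B^TX_{k+1}^\lambda B\end{bmatrix}$. It was shown that $\Lambda$ is exactly the set of KKT points (with Lagrange multipliers $P_k$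 for the equality constraints and $\lambda$ for the inequality constraint) of this problem, and that if $C(\{S_k^\lambda\})=C(\{S_k^{\lambda+\varepsilon}\})$ then $J_p(\{S_k^\lambda\})=J_p(\{S_k^{\lambda+\varepsilon}\})$. *)

From mathcomp Require Import all_boot all_order all_algebra.
Set Implicit Arguments. Unset Strict Implicit. Unset Printing Implicit Defensive.
Import Order.TTheory GRing.Theory Num.Theory.
Local Open Scope ring_scope.

Definition psd (R : realFieldType) k (M : 'M[R]_k) : Prop :=
  M^T = M /\ forall x : 'cV[R]_k, 0 <= (x^T *m M *m x) 0 0.
Definition pd (R : realFieldType) k (M : 'M[R]_k) : Prop :=
  M^T = M /\ forall x : 'cV[R]_k, x != 0 -> 0 < (x^T *m M *m x) 0 0.

(* Problem data: x(k+1) = A x(k) + B u(k) + w(k), x(0) ~ N(z,V), w ~ N(0,W);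
   cost weights Qf, Q k, Rc k; constraint weights Qtf, Qt k, Rt k. *)
Record LQGdata (R : realFieldType) (n m : nat) := {
  A : 'M[R]_n; B : 'M[R]_(n, m);
  V : 'M[R]_n; W : 'M[R]_n; z : 'cV[R]_n;
  Qf : 'M[R]_n; Qtf : 'M[R]_n;
  Q : nat -> 'M[R]_n; Qt : nat -> 'M[R]_n;
  Rc : nat -> 'M[R]_m; Rt : nat -> 'M[R]_m }.

Section LQG.
Variables (R : realFieldType) (n m : nat) (N : nat) (P : LQGdata R n m).

Definition AB : 'M[R]_(n, n + m) := row_mx (A P) (B P).
Definition IF (F : 'M[R]_(m, n)) : 'M[R]_(n + m, n) := col_mx 1%:M F.

Definition Phi (F : 'M[R]_(m, n)) (S : 'M[R]_(n + m)) : 'M[R]_(n + m) :=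
  IF F *m (AB *m S *m AB^T + W P) *m (IF F)^T.

(* initial second moment [I;F0](V + z z^T)[I;F0]^T *)
Definition S0 (F : 'M[R]_(m, n)) : 'M[R]_(n + m) :=
  IF F *m (V P + z P *m (z P)^T) *m (IF F)^T.

Definition gcost (Xf : 'M[R]_n) (X : nat -> 'M[R]_n) (Y : nat -> 'M[R]_m)
    (S : nat -> 'M[R]_(n + m)) : R :=
  \tr (Xf *m (AB *m S N.-1 *m AB^T + W P)) +
  \sum_(k < N) \tr (block_mx (X k) 0 0 (Y k) *m S k).

Definition Jp (S : nat -> 'M[R]_(n + m)) : R := gcost (Qf P) (Q P) (Rc P) S.
Definition Ccost (S : nat -> 'M[R]_(n + m)) : R := gcost (Qtf P) (Qt P) (Rt P) S.

Definition feasible (gamma : R) (S : nat -> 'M[R]_(n + m)) (F : nat -> 'M[R]_(m, n)) : Prop :=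
  S 0%N = S0 (F 0%N) /\
  (forall k : nat, (1 <= k < N)%N -> S k = Phi (F k) (S k.-1)) /\
  Ccost S <= gamma.

Definition strictly_feasible (gamma : R) (S : nat -> 'M[R]_(n + m)) (F : nat -> 'M[R]_(m, n)) : Prop :=
  S 0%N = S0 (F 0%N) /\
  (forall k : nat, (1 <= k < N)%N -> S k = Phi (F k) (S k.-1)) /\
  Ccost S < gamma.

Definition optimal (gamma : R) (S : nat -> 'M[R]_(n + m)) (F : nat -> 'M[R]_(m, n)) : Prop :=
  feasible gamma S F /\
  forall S' F', feasible gamma S' F' -> Jp S <= Jp S'.

Definition ricc_step (lam : R) (k : nat) (X : 'M[R]_n) : 'M[R]_n :=
  (A P)^T *m X *m A P
  - (A P)^T *m X *m B P
      *m invmx (Rc P k + lam *: Rt P k + (B P)^T *m X *m B P)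
      *m (B P)^T *m X *m A P
  + Q P k + lam *: Qt P k.

(* Xback lam j = X^lam_{N-j} *)
Fixpoint Xback (lam : R) (j : nat) : 'M[R]_n :=
  match j with
  | 0 => Qf P + lam *: Qtf P
  | j'.+1 => ricc_step lam (N - j'.+1) (Xback lam j')
  end.

Definition Xlam (lam : R) (k : nat) : 'M[R]_n := Xback lam (N - k).

Definition Flam (lam : R) (k : nat) : 'M[R]_(m, n) :=
  - (invmx (Rc P k + lam *: Rt P k + (B P)^T *m Xlam lam k.+1 *m B P)
       *m (B P)^T *m Xlam lam k.+1 *m A P).

Fixpoint Slam (lam : R) (k : nat) : 'M[R]_(n + m) :=
  match k with
  | 0 => S0 (Flam lam 0)
  | k'.+1 => Phi (Flam lam k'.+1) (Slam lam k')
  end.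

(* multiplier matrices P^lam_k (not needed in the statement's conclusion) *)
Definition Plam (lam : R) (k : nat) : 'M[R]_(n + m) :=
  block_mx (Q P k + lam *: Qt P k + (A P)^T *m Xlam lam k.+1 *m A P)
           ((A P)^T *m Xlam lam k.+1 *m B P)
           ((B P)^T *m Xlam lam k.+1 *m A P)
           (Rc P k + lam *: Rt P k + (B P)^T *m Xlam lam k.+1 *m B P).

End LQG.

(* Weak duality along the Riccati recursion.  For lambda > 0 let L(S) = J(S) + lambda C(S).
   Completing the square with the multiplier matrices P_k^lambda shows that every
   trajectory generated by feedback gains F_k satisfies
     L(S) = Tr(X_0 Sigma_0) + sum_k Tr(X_{k+1} W) + sum_k Tr(D_k Sigma_k),
   where Sigma_k is the second moment of the state and
   D_k = (F_k - F_k^lambda)^T H_k (F_k - F_k^lambda) with H_k positive definite.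
   The first two terms do not depend on the trajectory, and the last one is
   nonnegative (a trace of a product of positive semidefinite matrices) and vanishes
   for F^lambda.  Hence S^lambda minimises L, and since C(S^lambda) = gamma, every
   feasible S has J(S) >= L(S) - lambda gamma >= L(S^lambda) - lambda gamma = J(S^lambda). *)

From mathcomp Require Import all_boot all_order all_algebra.
From mathcomp Require Import ring lra.
Import Order.TTheory GRing.Theory Num.Theory.
Set Implicit Arguments. Unset Strict Implicit.
Local Open Scope ring_scope.

Section PsdMatrices.
Variable R : realFieldType.
Implicit Types (a b c : R) (k : nat).

Definition bilform k (M : 'M[R]_k) (x y : 'cV[R]_k) : R := (x^T *m M *m y) 0 0.

Lemma bilformDl k (M : 'M[R]_k) x x' y :
  bilform M (x + x') y = bilform M x y + bilform M x' y.
Proof. by rewrite /bilform linearD /= !mulmxDl mxE. Qed.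

Lemma bilformDr k (M : 'M[R]_k) x y y' :
  bilform M x (y + y') = bilform M x y + bilform M x y'.
Proof. by rewrite /bilform mulmxDr mxE. Qed.

Lemma bilformZl k (M : 'M[R]_k) a x y : bilform M (a *: x) y = a * bilform M x y.
Proof. by rewrite /bilform linearZ /= -!scalemxAl mxE. Qed.

Lemma bilformZr k (M : 'M[R]_k) a x y : bilform M x (a *: y) = a * bilform M x y.
Proof. by rewrite /bilform -scalemxAr mxE. Qed.

Lemma bilformC k (M : 'M[R]_k) x y : M^T = M -> bilform M x y = bilform M y x.
Proof.
move=> symM; rewrite /bilform.
have -> : (x^T *m M *m y) 0 0 = (x^T *m M *m y)^T 0 0 by rewrite [RHS]mxE.
by rewrite !trmx_mul trmxK symM mulmxA.
Qed.

Lemma bilform_deltal k (M : 'M[R]_k) i y : bilform M (delta_mx i 0) y = (M *m y) i 0.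
Proof. by rewrite /bilform trmx_delta -mulmxA -rowE !mxE. Qed.

Lemma bilform_delta k (M : 'M[R]_k) i l : bilform M (delta_mx i 0) (delta_mx l 0) = M i l.
Proof. by rewrite bilform_deltal -colE !mxE. Qed.

Lemma bilform_outer k (c x : 'cV[R]_k) :
  bilform (c *m c^T) x x = (c^T *m x) 0 0 ^+ 2.
Proof.
rewrite /bilform mulmxA -mulmxA [LHS]mxE big_ord1 expr2.
have -> : x^T *m c = (c^T *m x)^T by rewrite trmx_mul trmxK.
by rewrite [(_^T) 0 0]mxE.
Qed.

Lemma sym_entryC k (M : 'M[R]_k) i l : M^T = M -> M l i = M i l.
Proof. by move=> symM; rewrite -{1}symM mxE. Qed.

Lemma psd_bilform k (M : 'M[R]_k) x : psd M -> 0 <= bilform M x x.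
Proof. by case=> _; apply. Qed.

Lemma pd_psd k (M : 'M[R]_k) : pd M -> psd M.
Proof.
case=> symM posM; split=> // x; have [->|x0] := eqVneq x 0.
  by rewrite mulmx0 mxE.
exact: ltW (posM x x0).
Qed.

Lemma psd_cong p q (T : 'M[R]_(p, q)) (M : 'M[R]_q) : psd M -> psd (T *m M *m T^T).
Proof.
case=> symM posM; split; first by rewrite !trmx_mul trmxK symM mulmxA.
by move=> x; have := posM (T^T *m x); rewrite trmx_mul trmxK !mulmxA.
Qed.

Lemma psd_add k (M1 M2 : 'M[R]_k) : psd M1 -> psd M2 -> psd (M1 + M2).
Proof.
case=> sym1 pos1 [sym2 pos2]; split; first by rewrite linearD /= sym1 sym2.
by move=> x; rewrite mulmxDr mulmxDl mxE addr_ge0.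
Qed.

Lemma psd_scale k (M : 'M[R]_k) a : 0 <= a -> psd M -> psd (a *: M).
Proof.
move=> a_ge0 [symM posM]; split; first by rewrite linearZ /= symM.
by move=> x; rewrite -scalemxAr -scalemxAl mxE mulr_ge0.
Qed.

Lemma pd_add k (M1 M2 : 'M[R]_k) : pd M1 -> psd M2 -> pd (M1 + M2).
Proof.
case=> sym1 pos1 [sym2 pos2]; split; first by rewrite linearD /= sym1 sym2.
by move=> x x0; rewrite mulmxDr mulmxDl mxE ltr_wpDr ?pos2 ?pos1.
Qed.

Lemma psd_outer k (c : 'cV[R]_k) : psd (c *m c^T).
Proof.
split=> [|x]; first by rewrite trmx_mul trmxK.
by rewrite -/(bilform _ x x) bilform_outer sqr_ge0.
Qed.

Lemma psd_block_diag p q (M1 : 'M[R]_p) (M2 : 'M[R]_q) :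
  psd M1 -> psd M2 -> psd (block_mx M1 0 0 M2).
Proof.
move=> psd1 psd2.
have -> : block_mx M1 0 0 M2 = col_mx 1%:M 0 *m M1 *m (col_mx 1%:M 0)^T
                               + col_mx 0 1%:M *m M2 *m (col_mx 0 1%:M)^T.
  rewrite !tr_col_mx !trmx1 !trmx0 !mul_col_mx !mul_mx_row.
  by rewrite !(mul1mx, mul0mx, mulmx1, mulmx0) add_col_mx !add_row_mx !(addr0, add0r).
by apply: psd_add; apply: psd_cong.
Qed.

Lemma pd_unitmx k (M : 'M[R]_k) : pd M -> M \in unitmx.
Proof.
case=> _ posM; rewrite unitmxE unitfE; apply/negP => /det0P [v v0 Mv0].
have := posM v^T; rewrite trmx_eq0 trmxK Mv0 mul0mx mxE => /(_ v0).
by rewrite ltxx.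
Qed.

Lemma affine_ge0_slope0 b c : (forall t, 0 <= t * b + c) -> b = 0.
Proof.
move=> ge0; apply/eqP/negPn/negP => b0.
by have := ge0 (- (c + 1) / b); rewrite divfK //; lra.
Qed.

Lemma psd_diag0_row k (M : 'M[R]_k) j l : psd M -> M j j = 0 -> M j l = 0.
Proof.
case=> symM posM Mjj0.
suff : M j l + M j l = 0 by lra.
apply: (@affine_ge0_slope0 _ (M l l)) => t.
have := posM (t *: delta_mx j 0 + delta_mx l 0).
rewrite -/(bilform M _ _) !(bilformDl, bilformDr, bilformZl, bilformZr) !bilform_delta.
by rewrite Mjj0 (sym_entryC j l symM); lra.
Qed.

(* The form of the Schur complement at [x] is the form of [M] at
   [x - (s / M j j) *: delta_mx j 0], where [s] is the [j]-th entry of [M *m x]. *)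
Lemma psd_pivot_elim k (M : 'M[R]_k) j :
  psd M -> 0 < M j j -> psd (M - (M j j)^-1 *: (col j M *m (col j M)^T)).
Proof.
case=> symM posM a_gt0; split.
  by rewrite linearB linearZ /= trmx_mul trmxK symM.
move=> x; set a := M j j; set s := bilform M (delta_mx j 0) x.
have cx : ((col j M)^T *m x) 0 0 = s.
  by rewrite /s bilform_deltal colE trmx_mul symM trmx_delta -rowE -row_mul mxE.
rewrite -/(bilform _ x x).
have -> : bilform (M - a^-1 *: (col j M *m (col j M)^T)) x x =
          bilform M x x - a^-1 * bilform (col j M *m (col j M)^T) x x.
  by rewrite /bilform mulmxBr mulmxBl -scalemxAr -scalemxAl !mxE.
rewrite bilform_outer cx.
have := posM (x + (- (s / a)) *: delta_mx j 0).
rewrite -/(bilform M _ _) !(bilformDl, bilformDr, bilformZl, bilformZr).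
rewrite bilform_delta (bilformC x _ symM) -/s -/a.
suff -> : bilform M x x - a^-1 * s ^+ 2 =
  bilform M x x + - (s / a) * s + (- (s / a) * s + - (s / a) * (- (s / a) * a)) by [].
by field; rewrite lt0r_neq0.
Qed.

(* Without square roots [K] cannot be factored; instead symmetric Gaussian elimination
   writes [M] as a nonnegative combination of rank-one matrices [c *m c^T], one row at
   a time, and [\tr (K *m (c *m c^T))] is the form of [K] at [c]. *)
Lemma psd_mxtrace_mul_ge0 k (K M : 'M[R]_k) : psd K -> psd M -> 0 <= \tr (K *m M).
Proof.
move=> psdK.
suff rows_ge0 d (M' : 'M[R]_k) : psd M' ->
    (forall i l : 'I_k, (d <= i)%N -> M' i l = 0) -> 0 <= \tr (K *m M').
  by move=> psdM; apply: (rows_ge0 k) => // i l; rewrite leqNgt ltn_ord.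
elim: d M' => [|d IH] S psdS Srows.
  have -> : S = 0 by apply/matrixP => i l; rewrite mxE Srows.
  by rewrite mulmx0 linear0.
have [kd|dk] := leqP k d.
  by apply: IH => // i l /(leq_trans kd); rewrite leqNgt ltn_ord.
set j := Ordinal dk.
have rowsE (i l : 'I_k) : (d <= i)%N -> i != j -> S i l = 0.
  by rewrite leq_eqVlt => /orP [/eqP di /negP[] | /Srows //]; apply/eqP/val_inj.
have [Sjj0|Sjj_neq0] := eqVneq (S j j) 0.
  apply: IH => // i l /rowsE; have [-> _|_ -> //] := eqVneq i j.
  exact: psd_diag0_row.
have a_gt0 : 0 < S j j.
  by rewrite lt0r Sjj_neq0 -bilform_delta psd_bilform.
set c := col j S; set T := S - (S j j)^-1 *: (c *m c^T).
have trKc : \tr (K *m (c *m c^T)) = bilform K c c.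
  by rewrite mulmxA mxtrace_mulC mulmxA trace_mx11.
have -> : \tr (K *m S) = \tr (K *m T) + (S j j)^-1 * bilform K c c.
  by rewrite /T mulmxBr -scalemxAr linearB linearZ /= trKc subrK.
apply: addr_ge0; last by apply: mulr_ge0; [rewrite invr_ge0 ltW | exact: psd_bilform].
apply: IH => [|i l /rowsE rowi]; first exact: psd_pivot_elim.
have symS : S^T = S by case: psdS.
rewrite /T !mxE big_ord1 !mxE.
have [->|ij] := eqVneq i j; first by rewrite (sym_entryC j l symS) mulKf ?subrr.
by rewrite !rowi // mul0r mulr0 subr0.
Qed.

End PsdMatrices.

Lemma mx_complete_square (R : comUnitRingType) n m (Y : 'M[R]_n) (G : 'M[R]_(m, n))
    (H : 'M[R]_m) (F : 'M[R]_(m, n)) :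
  H \in unitmx -> H^T = H ->
  (col_mx 1%:M F)^T *m block_mx Y G^T G H *m col_mx 1%:M F =
  Y - G^T *m invmx H *m G + (F + invmx H *m G)^T *m H *m (F + invmx H *m G).
Proof.
move=> Hunit symH.
have symHi : (invmx H)^T = invmx H by rewrite trmx_inv symH.
rewrite tr_col_mx trmx1 mul_row_block mul_row_col !mul1mx mulmx1.
rewrite [(F + _)^T]linearD /= trmx_mul symHi mulmxDl !mulmxDr !mulmxDl -!mulmxA.
rewrite !(mulmxA H (invmx H)) (mulmxV Hunit) !mul1mx.
rewrite !(mulmxA (invmx H) H) (mulVmx Hunit) !mul1mx !mulmxA.
rewrite (addrC (F^T *m G)) [in RHS]addrCA.
by rewrite [Y - _ + _]addrA subrK [RHS]addrC [F^T *m H *m F + _]addrC.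
Qed.

Lemma gcost_lagrangian (R : realFieldType) n m N (P : LQGdata R n m) lam S :
  gcost N P (Qf P + lam *: Qtf P) (fun k => Q P k + lam *: Qt P k)
    (fun k => Rc P k + lam *: Rt P k) S = Jp N P S + lam * Ccost N P S.
Proof.
rewrite /Jp /Ccost /gcost.
have diagD k : block_mx (Q P k + lam *: Qt P k) 0 0 (Rc P k + lam *: Rt P k) =
    block_mx (Q P k) 0 0 (Rc P k) + lam *: block_mx (Qt P k) 0 0 (Rt P k).
  by rewrite scale_block_mx add_block_mx !scaler0 !addr0.
under eq_bigr => k _ do rewrite diagD mulmxDl -scalemxAl mxtraceD mxtraceZ.
rewrite big_split /= -mulr_sumr mulmxDl -scalemxAl mxtraceD mxtraceZ.
ring.
Qed.

Definition state_moment R n m (P : LQGdata R n m) (S : nat -> 'M[R]_(n + m)) k : 'M[R]_n :=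
  if k is k'.+1 then AB P *m S k' *m (AB P)^T + W P else V P + z P *m (z P)^T.

Section Riccati.
Variables (R : realFieldType) (n m N : nat) (P : LQGdata R n m) (lam : R).
Hypotheses (psdQf : psd (Qf P)) (psdQtf : psd (Qtf P))
  (psdQ : forall k, psd (Q P k)) (psdQt : forall k, psd (Qt P k))
  (pdRRt : forall k (mu : R), 0 < mu -> pd (Rc P k + mu *: Rt P k))
  (lam_gt0 : 0 < lam).

Local Notation X := (Xlam N P lam).

Definition Hlam k : 'M[R]_m := Rc P k + lam *: Rt P k + (B P)^T *m X k.+1 *m B P.

Definition excess_weight (F : 'M[R]_(m, n)) k : 'M[R]_n :=
  (F - Flam N P lam k)^T *m Hlam k *m (F - Flam N P lam k).

Lemma Xlam_N : X N = Qf P + lam *: Qtf P.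
Proof. by rewrite /Xlam subnn. Qed.

Lemma Xlam_S k : (k < N)%N -> X k = ricc_step P lam k (X k.+1).
Proof.
move=> lt_kN; rewrite /Xlam -(subnSK lt_kN) /=.
by rewrite subnSK // subKn // ltnW.
Qed.

Lemma Plam_block k : Plam N P lam k =
  block_mx (Q P k + lam *: Qt P k) 0 0 (Rc P k + lam *: Rt P k)
  + (AB P)^T *m X k.+1 *m AB P.
Proof. by rewrite /Plam /AB tr_row_mx mul_col_mx mul_col_row add_block_mx !add0r. Qed.

Lemma pd_Hlam k : psd (X k.+1) -> pd (Hlam k).
Proof.
move=> psdX; apply: pd_add; first exact: pdRRt.
by rewrite -{2}(trmxK (B P)); apply: psd_cong.
Qed.

Lemma Plam_complete_square k F : (k < N)%N -> psd (X k.+1) ->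
  (IF F)^T *m Plam N P lam k *m IF F = X k + excess_weight F k.
Proof.
move=> lt_kN psdX.
have pdH := pd_Hlam psdX.
have symX : (X k.+1)^T = X k.+1 by case: psdX.
set G := (B P)^T *m X k.+1 *m A P.
have GT : (A P)^T *m X k.+1 *m B P = G^T by rewrite /G !trmx_mul trmxK symX mulmxA.
rewrite /excess_weight.
have -> : Flam N P lam k = - (invmx (Hlam k) *m G) by rewrite /Flam /G !mulmxA.
rewrite opprK Xlam_S // /ricc_step /Plam GT -/(Hlam k).
rewrite mx_complete_square ?pd_unitmx //; last by case: pdH.
by rewrite /G !mulmxA -[in RHS](addrA _ (Q P k)) [in RHS](addrC _ (Q P k + _)) addrA.
Qed.

Lemma excess_weight_Flam k : excess_weight (Flam N P lam k) k = 0.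
Proof. by rewrite /excess_weight subrr trmx0 !mul0mx. Qed.

Lemma psd_excess_weight F k : psd (X k.+1) -> psd (excess_weight F k).
Proof.
move=> psdX; rewrite /excess_weight -[X in _ *m X](trmxK (F - _)).
exact/psd_cong/pd_psd/pd_Hlam.
Qed.

Lemma psd_Plam k : psd (X k.+1) -> psd (Plam N P lam k).
Proof.
move=> psdX; rewrite Plam_block; apply: psd_add.
  apply: psd_block_diag; last exact/pd_psd/pdRRt.
  by apply: psd_add => //; apply: psd_scale; rewrite ?ltW.
by rewrite -{2}(trmxK (AB P)); apply: psd_cong.
Qed.

Lemma psd_Xlam k : (k <= N)%N -> psd (X k).
Proof.
move=> le_kN; rewrite -(subKn le_kN).
elim: (N - k)%N (leq_subr k N) => [_|j IH lt_jN].
  by rewrite subn0 Xlam_N; apply: psd_add => //; apply: psd_scale; rewrite ?ltW.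
have lt_N : (N - j.+1 < N)%N by rewrite ltn_subrL (leq_ltn_trans _ lt_jN).
have psdX : psd (X (N - j.+1).+1) by rewrite subnSK //; exact/IH/ltnW.
have := Plam_complete_square (Flam N P lam (N - j.+1)) lt_N psdX.
rewrite excess_weight_Flam addr0 => <-.
by rewrite -[X in _ *m X](trmxK (IF _)); apply/psd_cong/psd_Plam.
Qed.

Section Trajectory.
Variables (S : nat -> 'M[R]_(n + m)) (F : nat -> 'M[R]_(m, n)).
Hypotheses (S_0 : S 0%N = S0 P (F 0%N))
  (S_S : forall k, (1 <= k < N)%N -> S k = Phi P (F k) (S k.-1)).

Local Notation Sigma := (state_moment P S).

Lemma S_state_moment k : (k < N)%N -> S k = IF (F k) *m Sigma k *m (IF (F k))^T.
Proof. by case: k => [|k] lt_kN; [rewrite S_0 | rewrite S_S]. Qed.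

Lemma psd_state_moment k : pd (V P) -> pd (W P) -> (k < N)%N -> psd (Sigma k).
Proof.
move=> pdV pdW; elim: k => [|k IH] lt_kN.
  exact/psd_add/psd_outer/pd_psd.
apply/psd_add/pd_psd/pdW.
by rewrite /= S_state_moment 1?ltnW //; apply/psd_cong/psd_cong/IH/ltnW.
Qed.

Lemma stage_cost_shift k : (k < N)%N ->
  \tr (block_mx (Q P k + lam *: Qt P k) 0 0 (Rc P k + lam *: Rt P k) *m S k) =
  \tr (X k *m Sigma k) - \tr (X k.+1 *m Sigma k.+1) + \tr (X k.+1 *m W P)
  + \tr (excess_weight (F k) k *m Sigma k).
Proof.
move=> lt_kN; have psdX : psd (X k.+1) by apply: psd_Xlam.
have next : \tr (X k.+1 *m Sigma k.+1) =
    \tr ((AB P)^T *m X k.+1 *m AB P *m S k) + \tr (X k.+1 *m W P).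
  by rewrite /= mulmxDr mxtraceD !mulmxA mxtrace_mulC !mulmxA.
have stage : \tr (block_mx (Q P k + lam *: Qt P k) 0 0 (Rc P k + lam *: Rt P k) *m S k)
    + \tr ((AB P)^T *m X k.+1 *m AB P *m S k)
    = \tr (X k *m Sigma k) + \tr (excess_weight (F k) k *m Sigma k).
  rewrite -mxtraceD -mulmxDl -Plam_block (S_state_moment lt_kN) !mulmxA.
  by rewrite mxtrace_mulC !mulmxA Plam_complete_square // mulmxDl mxtraceD.
by rewrite next; move: stage; lra.
Qed.

Lemma lagrangian_decomposition : (0 < N)%N ->
  Jp N P S + lam * Ccost N P S =
  \tr (X 0%N *m Sigma 0%N) + \sum_(k < N) \tr (X k.+1 *m W P)
  + \sum_(k < N) \tr (excess_weight (F k) k *m Sigma k).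
Proof.
move=> N_gt0; rewrite -gcost_lagrangian /gcost -Xlam_N.
have -> : AB P *m S N.-1 *m (AB P)^T + W P = Sigma N.
  by rewrite -[in RHS](prednK N_gt0).
set f := fun k => \tr (X k *m Sigma k).
have telescope : \sum_(k < N) (f k - f k.+1) = f 0%N - f N.
  rewrite -opprB -(@telescope_sumr _ 0 N f) // big_mkord -sumrN.
  by apply: eq_bigr => k _; rewrite opprB.
rewrite (eq_bigr _ (fun k _ => stage_cost_shift (ltn_ord k))) big_split big_split /=.
by rewrite telescope /f /=; lra.
Qed.

End Trajectory.

Lemma Slam_lagrangian_le S F : (0 < N)%N -> pd (V P) -> pd (W P) ->
  S 0%N = S0 P (F 0%N) -> (forall k, (1 <= k < N)%N -> S k = Phi P (F k) (S k.-1)) ->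
  Jp N P (Slam N P lam) + lam * Ccost N P (Slam N P lam) <= Jp N P S + lam * Ccost N P S.
Proof.
move=> N_gt0 pdV pdW S_0 S_S.
rewrite (lagrangian_decomposition S_0 S_S N_gt0).
rewrite (@lagrangian_decomposition (Slam N P lam) (Flam N P lam)) //; last by case.
rewrite [X in _ + X <= _]big1 => [|k _]; last by rewrite excess_weight_Flam mul0mx linear0.
rewrite addr0 lerDl sumr_ge0 // => k _.
apply: psd_mxtrace_mul_ge0; first exact/psd_excess_weight/psd_Xlam.
exact: psd_state_moment S_0 S_S _ pdV pdW (ltn_ord k).
Qed.

End Riccati.

Theorem proposition5 (R : realFieldType) (n m N : nat) (P : LQGdata R n m)
    (gamma lam : R) :
  (0 < N)%N ->
  psd (Qf P) -> psd (Qtf P) ->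
  (forall k, psd (Q P k)) -> (forall k, psd (Qt P k)) ->
  (forall k (mu : R), 0 < mu -> pd (Rc P k + mu *: Rt P k)) ->
  pd (V P) -> pd (W P) ->
  (exists S F, strictly_feasible N P gamma S F) ->
  Ccost N P (Slam N P 0) > gamma ->
  0 < lam -> Ccost N P (Slam N P lam) = gamma ->
  optimal N P gamma (Slam N P lam) (Flam N P lam).
Proof.
move=> N_gt0 psdQf psdQtf psdQ psdQt pdRRt pdV pdW _ _ lam_gt0 C_gamma.
split; first by split=> //; split; [case | rewrite C_gamma].
move=> S F [S_0 [S_S C_le]].
have := Slam_lagrangian_le psdQf psdQtf psdQ psdQt pdRRt lam_gt0 N_gt0 pdV pdW S_0 S_S.
have : lam * Ccost N P S <= lam * gamma by rewrite ler_pM2l.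
rewrite C_gamma; lra.
Qed.
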